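(* For nonnegative integers $n_1,n_2,a,b$ and $n=n_1+n_2$, \begin{multline*} \sum_{i,j\ge0} q^{(n_1-a)i+(n_2-b)j-ij+i^2+j^2} \begin{bmatrix} n_1\\ a-i\end{bmatrix}_q\begin{bmatrix} n_2\\ b-j\end{bmatrix}_q \begin{bmatrix} n_1+n_2\\ n_1+i-j\end{bmatrix}_q \begin{bmatrix} n_1+i\\ n_1\end{bmatrix}_q \begin{bmatrix} n_2+j\\ n_2\end{bmatrix}_q\\ = \begin{bmatrix} n\\ n_1\end{bmatrix}_q\sum_{i\ge0} q^{(n-a-b)i + i^2} \begin{bmatrix} n+i\\ i\end{bmatrix}_q \begin{bmatrix} n\\ a-i\end{bmatrix}_q \begin{bmatrix} n\\ b-i\end{bmatrix}_q. \end{multline*}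
   Context: $[m]_q=1+\dots+q^{m-1}$, $[m]_q!=[1]_q\cdots[m]_q$, and $\begin{bmatrix} m\\ j\end{bmatrix}_q=\frac{[m]_q!}{[j]_q![m-j]_q!}$ for $0\le j\le m$, and $0$ otherwise. Sums are over integers. *)

From HB Require Import structures.
From mathcomp Require Import all_boot all_order all_algebra.
Set Implicit Arguments. Unset Strict Implicit. Unset Printing Implicit Defensive.
Import Order.TTheory GRing.Theory Num.Theory.
Local Open Scope ring_scope.

Definition qint (F : fieldType) (q : F) (m : nat) : F := \sum_(k < m) q ^+ k.
Definition qfact (F : fieldType) (q : F) (m : nat) : F := \prod_(k < m) qint q k.+1.
Definition qbinom (F : fieldType) (q : F) (m j : int) : F :=
  if (0 <= j) && (j <= m) then
    qfact q `|m|%N / (qfact q `|j|%N * qfact q `|m - j|%N)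
  else 0.

Definition RatFun := {fraction {poly rat}}.
Definition qX : RatFun := FracField.tofrac ('X : {poly rat}).

(* Write [m; r] for the Gaussian binomial, defined through Pascal's rule
   [m+1; r+1] = [m; r] + q^(r+1) [m; r+1], and N = n1 + n2.  The proof
   works over any field and any q that is nonzero and not a nontrivial
   root of unity; at the end q is the indeterminate of Q(q).

   1. The recursive Gaussian binomial agrees with the factorial formula
      used to define [qbinom].
   2. q-Vandermonde: sum_i q^((m-a+i)(i-k)) [m; a-i] [p; i-k] = [m+p; a-k].
   3. Splitting identity: [n1+i; j] [n2+j; i] =
        sum_k q^((i-k)(j-k)) [N+k; k] [n2; i-k] [n1; j-k],
      proved by induction on n1 with a summation by parts in k.
   4. Factorial bookkeeping:
        [N; n1+i-j] [n1+i; n1] [n2+j; n2] = [N; n1] [n1+i; j] [n2+j; i].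
   Applying 4 and 3 to each summand of the left-hand side produces a
   triple sum over i, j, k; summing over i and over j separately by 2 gives
   [N; n1] sum_k q^((N-a-b)k + k^2) [N+k; k] [N; a-k] [N; b-k], whose terms
   vanish for k > min a b. *)
Set Warnings "-notation-overridden,-ambiguous-paths".
From HB Require Import structures.
From mathcomp Require Import all_boot all_order all_algebra.
From mathcomp Require Import zify ring.
Set Implicit Arguments. Unset Strict Implicit. Unset Printing Implicit Defensive.
Import Order.TTheory GRing.Theory Num.Theory.
Local Open Scope ring_scope.

Lemma sum_by_parts (R : comPzRingType) (K : nat) (A B u : nat -> R) :
  B 0%N = 0 -> u K = 0 -> (forall k, B k.+1 = A k) ->
  \sum_(k < K) A k * (u k - u k.+1) = \sum_(k < K) (A k - B k) * u k.
Proof.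
move=> B0 uK BA.
have shifted : \sum_(k < K) A k * u k.+1 = \sum_(k < K) B k * u k.
  have extended : \sum_(k < K.+1) B k * u k = \sum_(k < K) A k * u k.+1.
    rewrite big_ord_recl B0 mul0r add0r.
    by apply: eq_bigr => k _; rewrite lift0 BA.
  by rewrite -extended big_ord_recr /= uK mulr0 addr0.
under eq_bigr do rewrite mulrBr.
by rewrite sumrB shifted -sumrB; under eq_bigr do rewrite -mulrBl.
Qed.

Lemma sum_extend (R : nmodType) (m K : nat) (F : nat -> R) : (m <= K)%N ->
  (forall k, (m <= k < K)%N -> F k = 0) ->
  \sum_(k < m) F k = \sum_(k < K) F k.
Proof.
move=> mK Fout; rewrite (big_ord_widen K F mK) big_mkcond /=.
apply: eq_bigr => k _; case: ifP => // /negbT; rewrite -leqNgt => mk.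
by rewrite Fout // mk ltn_ord.
Qed.

Lemma exponent_split (n1 n2 a b i j k : nat) :
  (n1%:Z - a%:Z) * i%:Z + (n2%:Z - b%:Z) * j%:Z - i%:Z * j%:Z + i%:Z ^+ 2 + j%:Z ^+ 2
  + (i%:Z - k%:Z) * (j%:Z - k%:Z)
  = ((n1 + n2)%N%:Z - a%:Z - b%:Z) * k%:Z + k%:Z ^+ 2
    + (n1%:Z - (a%:Z - i%:Z)) * (i%:Z - k%:Z) + (n2%:Z - (b%:Z - j%:Z)) * (j%:Z - k%:Z).
Proof. rewrite PoszD; ring. Qed.

Section GaussianBinomials.

Variables (F : fieldType) (q : F).

Fixpoint gauss (m r : nat) : F :=
  match m, r with
  | _, 0%N => 1
  | 0%N, _.+1 => 0
  | m'.+1, r'.+1 => gauss m' r' + q ^+ r'.+1 * gauss m' r'.+1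
  end.

(* Keep Pascal's rule folded: [gaussS] unfolds it on demand. *)
Arguments gauss : simpl never.

Definition gaussz (m : nat) (z : int) : F :=
  match z with Posz r => gauss m r | Negz _ => 0 end.

Lemma gauss_m0 m : gauss m 0 = 1. Proof. by case: m. Qed.

Lemma gaussS m r : gauss m.+1 r.+1 = gauss m r + q ^+ r.+1 * gauss m r.+1.
Proof. by []. Qed.

Lemma gauss_gt m r : (m < r)%N -> gauss m r = 0.
Proof.
elim: m r => [|m IHm] [|r] // mr.
by rewrite gaussS !IHm ?mulr0 ?addr0 //; lia.
Qed.

Lemma gaussz_neg m z : z < 0 -> gaussz m z = 0.
Proof. by case: z. Qed.

Lemma gaussz_0m z : gaussz 0 z = (z == 0)%:R.
Proof. by case: z => [[|r]|r]. Qed.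

Lemma gaussz_pascal m z : gaussz m.+1 z = gaussz m (z - 1) + q ^ z * gaussz m z.
Proof.
case: z => [[|r]|r] /=.
- by rewrite !gauss_m0 mulr1 add0r expr0z.
- by rewrite subSS subn0.
- by rewrite mulr0 addr0.
Qed.

Lemma qfactS m : qfact q m.+1 = qfact q m * qint q m.+1.
Proof. by rewrite /qfact big_ord_recr. Qed.

Lemma qintD m r : qint q (m + r) = qint q m + q ^+ m * qint q r.
Proof.
rewrite /qint big_split_ord /= mulr_sumr.
by congr (_ + _); apply: eq_bigr => i _; rewrite exprD.
Qed.

Lemma gauss_fact m r : (r <= m)%N ->
  gauss m r * (qfact q r * qfact q (m - r)) = qfact q m.
Proof.
elim: m r => [|m IHm] [|r] //= rm.
- by rewrite subnn /qfact !big_ord0 !mul1r.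
- by rewrite /qfact big_ord0 !mul1r subn0.
have left_term : gauss m r * (qfact q r.+1 * qfact q (m.+1 - r.+1))
                 = qfact q m * qint q r.+1.
  by rewrite subSS qfactS -(IHm r) //; ring.
have right_term : gauss m r.+1 * (qfact q r.+1 * qfact q (m.+1 - r.+1))
                  = qfact q m * qint q (m - r).
  have [rm'|mr] := ltnP r m.
    rewrite subSS -(IHm r.+1 rm').
    have -> : (m - r = (m - r.+1).+1)%N by lia.
    by rewrite (qfactS (m - r.+1)); ring.
  have -> : (m - r = 0)%N by lia.
  by rewrite gauss_gt ?mul0r /qint ?big_ord0 ?mulr0 //; lia.
rewrite gaussS mulrDl left_term -mulrA right_term qfactS.
have -> : m.+1 = (r.+1 + (m - r))%N by lia.
by rewrite qintD; ring.
Qed.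

(* When q is not a nontrivial root of unity, no q-integer [k]_q (k > 0)
   vanishes, hence no q-factorial does. *)
Hypothesis qint_neq0 : forall k, (0 < k)%N -> qint q k != 0.

Lemma qfact_neq0 m : qfact q m != 0.
Proof. by apply/prodf_neq0 => i _; apply: qint_neq0. Qed.

Lemma gauss_formula m r : (r <= m)%N ->
  gauss m r = qfact q m / (qfact q r * qfact q (m - r)).
Proof.
by move=> rm; rewrite -(gauss_fact rm) mulfK // mulf_neq0 // qfact_neq0.
Qed.

Lemma qbinom_gaussz (m : nat) (z : int) : qbinom q m z = gaussz m z.
Proof.
rewrite /qbinom; case: z => [r|r] //=.
have [rm|mr] := leqP r m.
  rewrite lez_nat rm /= gauss_formula //.
  by have -> : `|(m%:Z - r%:Z)|%N = (m - r)%N by lia.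
by rewrite lez_nat leqNgt mr /= gauss_gt.
Qed.

(* The n1 = 0 case of the splitting identity:
   [i; j] [n2+j; i] = [n2+j; j] [n2; i-j]. *)
Lemma gauss_swap i j n2 :
  gauss i j * gauss (n2 + j) i = gauss (n2 + j) j * gaussz n2 (i%:Z - j%:Z).
Proof.
have [ji|ij] := leqP j i; last first.
  by rewrite gauss_gt // gaussz_neg ?mul0r ?mulr0 //; lia.
have -> : i%:Z - j%:Z = (i - j)%N by lia.
have [i_le|i_gt] := leqP i (n2 + j); last first.
  by rewrite (gauss_gt i_gt) /= (@gauss_gt n2) ?mulr0 //; lia.
rewrite /= !gauss_formula //; try lia.
have -> : (n2 + j - j = n2)%N by lia.
have -> : (n2 - (i - j) = n2 + j - i)%N by lia.
by field; rewrite !qfact_neq0.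
Qed.

(* Factorial bookkeeping: both sides equal (n1+n2)! (n1+i)! (n2+j)! divided
   by n1! n2! i! j! (n1+i-j)! (n2+j-i)!, or both vanish. *)
Lemma gauss_product_swap n1 n2 i j :
  gaussz (n1 + n2) (n1%:Z + i%:Z - j%:Z) * gauss (n1 + i) n1 * gauss (n2 + j) n2
  = gauss (n1 + n2) n1 * gauss (n1 + i) j * gauss (n2 + j) i.
Proof.
have [j_le|j_gt] := leqP j (n1 + i); last first.
  by rewrite gaussz_neg ?(gauss_gt j_gt) ?mulr0 ?mul0r //; lia.
have -> : n1%:Z + i%:Z - j%:Z = (n1 + i - j)%N by lia.
have [i_le|i_gt] := leqP i (n2 + j); last first.
  by rewrite /= (gauss_gt i_gt) (@gauss_gt (n1 + n2)) ?mulr0 ?mul0r //; lia.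
rewrite /= !gauss_formula //; try lia.
have -> : (n1 + n2 - (n1 + i - j) = n2 + j - i)%N by lia.
have -> : (n1 + i - n1 = i)%N by lia.
have -> : (n2 + j - n2 = j)%N by lia.
have -> : (n1 + n2 - n1 = n2)%N by lia.
by field; rewrite !qfact_neq0.
Qed.

Hypothesis q_neq0 : q != 0.

Lemma expqD (x y : int) : q ^ (x + y) = q ^ x * q ^ y.
Proof. exact: expfzDr. Qed.

(* q-Vandermonde convolution, with the summation index i running over an
   interval [0, K) that contains every i with [m; a - i] nonzero. *)
Lemma q_vandermonde m p (a : int) (k K : nat) : a < K%:Z ->
  \sum_(i < K) q ^ ((m%:Z - (a - i%:Z)) * (i%:Z - k%:Z))
                 * gaussz m (a - i%:Z) * gaussz p (i%:Z - k%:Z)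
  = gaussz (m + p) (a - k%:Z).
Proof.
elim: m a => [|m IHm] a aK.
  case: a aK => [a|a] aK; last first.
    rewrite gaussz_neg ?big1 // => [i _|]; last by lia.
    by rewrite gaussz_neg ?mulr0 ?mul0r //; lia.
  have aK' : (a < K)%N by move: aK; rewrite ltz_nat.
  rewrite (big_only1 (Ordinal aK')) //=.
    by rewrite subrr subr0 mul0r expr0z gaussz_0m !mul1r.
  move=> i + _; rewrite -val_eqE /= => ia; rewrite gaussz_0m.
  have -> : (a%:Z - i%:Z == 0) = false by apply/negbTE; move: ia; lia.
  by rewrite mulr0 mul0r.
rewrite addSn gaussz_pascal.
have -> : a - k%:Z - 1 = (a - 1) - k%:Z by ring.
have aK1 : a - 1 < K%:Z by lia.
rewrite -(IHm _ aK1) -(IHm _ aK) mulr_sumr -big_split /=.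
apply: eq_bigr => i _; rewrite gaussz_pascal.
have -> : a - i%:Z - 1 = (a - 1) - i%:Z by ring.
have -> : (m.+1%:Z - (a - i%:Z)) * (i%:Z - k%:Z) =
          (m%:Z - ((a - 1) - i%:Z)) * (i%:Z - k%:Z) by rewrite -addn1 PoszD; ring.
rewrite mulrDr mulrDl; congr (_ + _).
have e : (a - k%:Z) + (m%:Z - (a - i%:Z)) * (i%:Z - k%:Z) =
         (m%:Z - (a - 1 - i%:Z)) * (i%:Z - k%:Z) + (a - i%:Z) by ring.
by rewrite !mulrA -expqD -e expqD.
Qed.

Definition split_sum (K n1 n2 i : nat) (j : int) : F :=
  \sum_(k < K) q ^ ((i%:Z - k%:Z) * (j - k%:Z)) * gauss (n1 + n2 + k) k
     * gaussz n2 (i%:Z - k%:Z) * gaussz n1 (j - k%:Z).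

(* [split_sum] obeys the Pascal recurrence satisfied, as a function of
   (n1, n2, j), by [n1+i; j] [n2+j; i].  Pascal's rule applied to the last
   two factors leaves a sum of differences u k - u (k+1), which Pascal's
   rule for [N+k+1; k] turns back into a multiple of [split_sum] by parts. *)
Lemma split_sum_rec K n1 n2 i (j : int) : (i < K)%N ->
  split_sum K n1.+1 n2 i j
  = split_sum K n1 n2.+1 i (j - 1) + q ^ j * split_sum K n1 n2 i j.
Proof.
move=> iK.
pose A k := gauss (n1 + n2 + k).+1 k.
pose B k := gaussz (n1 + n2 + k) (k%:Z - 1).
pose u (k : nat) := q ^ ((i%:Z - k%:Z) * (j - k%:Z) + (j - k%:Z))
                    * gaussz n2 (i%:Z - k%:Z) * gaussz n1 (j - k%:Z).
have pascal_step : split_sum K n1.+1 n2 i j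
    = split_sum K n1 n2.+1 i (j - 1) + \sum_(k < K) A k * (u k - u k.+1).
  rewrite /split_sum -big_split; apply: eq_bigr => k _ /=.
  rewrite /A /u addSn addnS !addSn (gaussz_pascal n1) (gaussz_pascal n2).
  have -> : i%:Z - k.+1%:Z = i%:Z - k%:Z - 1 by lia.
  have -> : j - k.+1%:Z = j - 1 - k%:Z by lia.
  have -> : j - k%:Z - 1 = j - 1 - k%:Z by lia.
  set t := i%:Z - k%:Z.
  have -> : t * (j - k%:Z) + (j - k%:Z) = t * (j - 1 - k%:Z) + t + (j - k%:Z).
    by rewrite /t; ring.
  have -> : t * (j - k%:Z) = t * (j - 1 - k%:Z) + t by rewrite /t; ring.
  have -> : (t - 1) * (j - 1 - k%:Z) + (j - 1 - k%:Z) = t * (j - 1 - k%:Z) by ring.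
  rewrite !expqD; ring.
rewrite pascal_step (@sum_by_parts _ K A B u).
- congr (_ + _); rewrite /split_sum mulr_sumr; apply: eq_bigr => k _.
  have -> : A k = gaussz (n1 + n2 + k).+1 k by [].
  rewrite /B /u (gaussz_pascal (n1 + n2 + k)) addrAC subrr add0r.
  have -> : q ^ j = q ^ k%:Z * q ^ (j - k%:Z) by rewrite -expqD addrC subrK.
  rewrite (expqD ((i%:Z - k%:Z) * (j - k%:Z))) /=; ring.
- by rewrite /B gaussz_neg.
- by rewrite /u gaussz_neg ?mulr0 ?mul0r //; lia.
- move=> k; rewrite /B /A addnS.
  by have -> : k.+1%:Z - 1 = k%:Z by lia.
Qed.

(* The splitting identity
     [n1+i; j] [n2+j; i] = sum_k q^((i-k)(j-k)) [N+k; k] [n2; i-k] [n1; j-k],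
   by induction on n1: the base case is [gauss_swap] and both sides obey
   Pascal's recurrence in (n1, n2, j). *)
Lemma gauss_split n1 n2 i j K : (i < K)%N ->
  gauss (n1 + i) j * gauss (n2 + j) i = split_sum K n1 n2 i j.
Proof.
move=> iK; elim: n1 n2 j => [|n1 IHn1] n2 j.
  rewrite /split_sum add0n; have [jK|Kj] := ltnP j K; last first.
    rewrite gauss_gt ?mul0r ?big1 // => [k _|]; last by lia.
    rewrite gaussz_0m.
    have -> : (j%:Z - k%:Z == 0) = false by apply/negbTE; have := ltn_ord k; lia.
    by rewrite mulr0.
  rewrite (big_only1 (Ordinal jK)) //= => [|k + _].
    by rewrite subrr mulr0 expr0z mul1r gaussz_0m eqxx mulr1 add0n gauss_swap.
  rewrite -val_eqE /= => kj; rewrite gaussz_0m.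
  have -> : (j%:Z - k%:Z == 0) = false by apply/negbTE; move: kj; lia.
  by rewrite mulr0.
case: j => [|j].
  have K0 : (0 < K)%N by lia.
  rewrite gauss_m0 mul1r addn0 /split_sum (big_only1 (Ordinal K0)) //= => [|k + _].
    by rewrite mulr0 expr0z !addn0 !gauss_m0 !mul1r mulr1.
  rewrite -val_eqE /= => k0.
  by rewrite (@gaussz_neg n1.+1 (0%:Z - k%:Z)) ?mulr0 //; lia.
rewrite addSn gaussS mulrDl -mulrA -addSnnS IHn1 addSnnS IHn1 split_sum_rec //.
by have -> : j.+1%:Z - 1 = j%:Z by lia.
Qed.

Section DoubleSum.

Variables n1 n2 a b : nat.
Let N := (n1 + n2)%N.

Definition rhs_coef (k : nat) : F :=
  gauss N n1 * q ^ ((N%:Z - a%:Z - b%:Z) * k%:Z + k%:Z ^+ 2) * gauss (N + k) k.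

Definition vdm_left (i k : nat) : F :=
  q ^ ((n1%:Z - (a%:Z - i%:Z)) * (i%:Z - k%:Z))
  * gaussz n1 (a%:Z - i%:Z) * gaussz n2 (i%:Z - k%:Z).
Definition vdm_right (j k : nat) : F :=
  q ^ ((n2%:Z - (b%:Z - j%:Z)) * (j%:Z - k%:Z))
  * gaussz n2 (b%:Z - j%:Z) * gaussz n1 (j%:Z - k%:Z).

Lemma summand_expand (i j : nat) : (i < a.+1)%N ->
  q ^ ((n1%:Z - a%:Z) * i%:Z + (n2%:Z - b%:Z) * j%:Z - i%:Z * j%:Z
       + i%:Z ^+ 2 + j%:Z ^+ 2)
  * gaussz n1 (a%:Z - i%:Z) * gaussz n2 (b%:Z - j%:Z)
  * gaussz N (n1%:Z + i%:Z - j%:Z) * gauss (n1 + i) n1 * gauss (n2 + j) n2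
  = \sum_(k < a.+1) rhs_coef k * vdm_left i k * vdm_right j k.
Proof.
move=> ia.
rewrite -!mulrA !(mulrA (gaussz N _)) gauss_product_swap -(mulrA (gauss N n1)).
rewrite (gauss_split n1 n2 j ia) /split_sum !mulr_sumr; apply: eq_bigr => k _.
set M := gauss N n1 * gauss (N + k) k * gaussz n1 (a%:Z - i%:Z)
         * gaussz n2 (b%:Z - j%:Z) * gaussz n2 (i%:Z - k%:Z) * gaussz n1 (j%:Z - k%:Z).
have -> : rhs_coef k * vdm_left i k * vdm_right j k
          = q ^ (((n1 + n2)%N%:Z - a%:Z - b%:Z) * k%:Z + k%:Z ^+ 2
                 + (n1%:Z - (a%:Z - i%:Z)) * (i%:Z - k%:Z)
                 + (n2%:Z - (b%:Z - j%:Z)) * (j%:Z - k%:Z)) * M.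
  by rewrite /rhs_coef /vdm_left /vdm_right /M !expqD; ring.
by rewrite -exponent_split !expqD /M; ring.
Qed.

Lemma sum_vdm (k : nat) :
  \sum_(i < a.+1) \sum_(j < b.+1) rhs_coef k * vdm_left i k * vdm_right j k
  = rhs_coef k * gaussz N (a%:Z - k%:Z) * gaussz N (b%:Z - k%:Z).
Proof.
have left_sum : \sum_(i < a.+1) vdm_left i k = gaussz N (a%:Z - k%:Z).
  by apply: q_vandermonde; rewrite ltz_nat.
have right_sum : \sum_(j < b.+1) vdm_right j k = gaussz N (b%:Z - k%:Z).
  by rewrite /N addnC; apply: q_vandermonde; rewrite ltz_nat.
rewrite -left_sum -right_sum [rhs_coef k * _]mulr_sumr mulr_suml.
by apply: eq_bigr => i _; rewrite mulr_sumr.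
Qed.

Lemma double_sum_identity :
  \sum_(i < a.+1) \sum_(j < b.+1)
     q ^ ((n1%:Z - a%:Z) * i%:Z + (n2%:Z - b%:Z) * j%:Z - i%:Z * j%:Z
          + i%:Z ^+ 2 + j%:Z ^+ 2)
     * gaussz n1 (a%:Z - i%:Z) * gaussz n2 (b%:Z - j%:Z)
     * gaussz N (n1%:Z + i%:Z - j%:Z) * gauss (n1 + i) n1 * gauss (n2 + j) n2
  = gauss N n1 *
    \sum_(k < (minn a b).+1)
     q ^ ((N%:Z - a%:Z - b%:Z) * k%:Z + k%:Z ^+ 2)
     * gauss (N + k) k * gaussz N (a%:Z - k%:Z) * gaussz N (b%:Z - k%:Z).
Proof.
under eq_bigr => i _ do under eq_bigr => j _ do rewrite summand_expand //.
under eq_bigr => i _ do rewrite exchange_big.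
rewrite exchange_big; under eq_bigr => k _ do rewrite sum_vdm.
rewrite mulr_sumr; symmetry.
pose term k := rhs_coef k * gaussz N (a%:Z - k%:Z) * gaussz N (b%:Z - k%:Z).
transitivity (\sum_(k < (minn a b).+1) term k).
  by apply: eq_bigr => k _; rewrite /term /rhs_coef; ring.
apply: (sum_extend (F := term)); first by rewrite ltnS geq_minl.
by move=> k /andP[mink ka]; rewrite /term (@gaussz_neg _ (b%:Z - k%:Z)) ?mulr0 //; lia.
Qed.

End DoubleSum.

End GaussianBinomials.

(* The indeterminate q of Q(q) is admissible: it is nonzero, and
   [k]_q = 1 + q + ... + q^(k-1) is a nonzero polynomial for k > 0, as its
   value at q = 1 is k. *)
Lemma qX_neq0 : qX != 0.
Proof. by rewrite /qX tofrac_eq0 polyX_eq0. Qed.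

Lemma qint_qX_neq0 k : (0 < k)%N -> qint qX k != 0.
Proof.
move=> k_gt0.
have -> : qint qX k = FracField.tofrac (\sum_(i < k) ('X : {poly rat}) ^+ i).
  by rewrite rmorph_sum; apply: eq_bigr => i _; rewrite rmorphXn.
rewrite tofrac_eq0; apply/eqP => /(congr1 (horner^~ 1)).
rewrite horner_sum hornerC; under eq_bigr do rewrite hornerXn expr1n.
by rewrite sumr_const card_ord => /eqP; rewrite pnatr_eq0 => /eqP k0; rewrite k0 in k_gt0.
Qed.

Theorem proposition5p1 (n1 n2 a b : nat) :
  let n := (n1 + n2)%N in
  \sum_(i < a.+1) \sum_(j < b.+1)
     qX ^ ((n1%:Z - a%:Z) * i%:Z + (n2%:Z - b%:Z) * j%:Z - i%:Z * j%:Z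
            + i%:Z ^+ 2 + j%:Z ^+ 2)
     * qbinom qX n1 (a%:Z - i%:Z) * qbinom qX n2 (b%:Z - j%:Z)
     * qbinom qX (n1 + n2)%N (n1%:Z + i%:Z - j%:Z)
     * qbinom qX (n1 + i)%N n1 * qbinom qX (n2 + j)%N n2
  = qbinom qX n n1 *
    \sum_(i < (minn a b).+1)
     qX ^ ((n%:Z - a%:Z - b%:Z) * i%:Z + i%:Z ^+ 2)
     * qbinom qX (n + i)%N i * qbinom qX n (a%:Z - i%:Z)
     * qbinom qX n (b%:Z - i%:Z).
Proof.
have qbinomE := qbinom_gaussz qint_qX_neq0.
move=> n; rewrite qbinomE.
under eq_bigr => i _ do under eq_bigr => j _ do rewrite !qbinomE.
under [in RHS]eq_bigr => k _ do rewrite !qbinomE.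
exact: (double_sum_identity qint_qX_neq0 qX_neq0).
Qed.
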